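(* Let $a_{max}\ge 1$, $U_0\ge 0$, $T>0$ and $t_0\ge 0$. Then there exist reals $t_0<t_1<t_2<\cdots$ and, for each $k\ge 0$, a real $s_k$ with $t_k\le s_k$ and $s_k+T\le t_{k+1}$, such that for every affine map $\varphi(s)=as+b$ with $0<a\le a_{max}$, $1/a\le a_{max}$ and $|b|\le a_{max}U_0$, and every $k\ge0$, one has $\varphi([s_k,s_k+T))\subseteq[t_k,t_{k+1})$.
   Context: Interpretation: the protocol stages are assigned adjacent intervals $[t_k,t_{k+1})$ of local clock time. A node $i$ transmits a message of size $W$ (via a MAC code guaranteeing delivery within a delay $T=T_{MAC}(W)$) during the local-time window $[s_k,s_k+T)$ of its own clock. For two good nodes $i,j$, node $j$'s clock reading as a function of node $i$'s reading $s$ is $\tau^j_i(s)=a_{ji}s+b_{ji}$, where all relative skews satisfy $0<a_{ij}\le a_{max}$ (for both orders, so $a_{ji}=1/a_{ij}\ge 1/a_{max}$) and $|b_{ji}|\le a_{max}U_0$; $\varphi$ plays the role of $\tau^j_i$. The conclusion says the message is received during the same interval as measured by node $j$'s clock. *)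

From Stdlib Require Import Reals.
Open Scope R_scope.

Definition image_in (a b lo T l u : R) : Prop :=
  forall x, lo <= x < lo + T -> l <= a * x + b < u.

(* With B := amax * U0, every admissible phi moves a time by a factor in [1/amax, amax] and a shift
   in [-B, B].  Sending at s_k := amax (t_k + B) puts phi(s_k) >= t_k, and closing the stage at
   t_{k+1} := amax (s_k + T) + B puts phi(s_k + T) below t_{k+1}; all times stay nonnegative, so
   the scalings act monotonically. *)
From Stdlib Require Import Reals Lra Psatz.
Open Scope R_scope.

Lemma Rabs_le_bounds (b B : R) : Rabs b <= B -> - B <= b <= B.
Proof.
  intro Hb; split.
  - pose proof (Rle_abs (- b)) as Hopp; rewrite Rabs_Ropp in Hopp; lra.
  - pose proof (Rle_abs b); lra.
Qed.

Lemma Rmult_inv_le_1 (a amax : R) : 0 < a -> / a <= amax -> 1 <= a * amax.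
Proof.
  intros Ha Hinv.
  rewrite <- (Rinv_r a) by lra.
  apply Rmult_le_compat_l; lra.
Qed.

Section Stages.

Variables amax B T : R.
Hypothesis amax_ge1 : 1 <= amax.
Hypothesis B_ge0 : 0 <= B.
Hypothesis T_gt0 : 0 < T.

Definition send_time (t : R) : R := amax * (t + B).

Definition next_stage (t : R) : R := amax * (send_time t + T) + B.

Fixpoint stage_start (t0 : R) (k : nat) : R :=
  match k with
  | O => t0
  | S k => next_stage (stage_start t0 k)
  end.

Lemma le_send_time (t : R) : 0 <= t -> t + B <= send_time t.
Proof. intro Ht; unfold send_time; nra. Qed.

Lemma send_time_end_le_next_stage (t : R) :
  0 <= t -> send_time t + T <= next_stage t.
Proof.
  intro Ht; pose proof (le_send_time t Ht).
  unfold next_stage; nra.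
Qed.

Lemma stage_start_ge0 (t0 : R) (k : nat) : 0 <= t0 -> 0 <= stage_start t0 k.
Proof.
  intro Ht0; induction k as [|k IHk]; simpl; [exact Ht0|].
  pose proof (le_send_time _ IHk); pose proof (send_time_end_le_next_stage _ IHk); lra.
Qed.

Lemma image_in_stage (a b t : R) :
  0 <= t -> 0 < a -> a <= amax -> / a <= amax -> Rabs b <= B ->
  image_in a b (send_time t) T t (next_stage t).
Proof.
  intros Ht Ha HaA HinvA Hb x [Hsx HxT].
  pose proof (Rabs_le_bounds _ _ Hb) as [HbL HbU].
  pose proof (Rmult_inv_le_1 _ _ Ha HinvA) as Hscale.
  pose proof (le_send_time t Ht) as Hsend.
  unfold next_stage, send_time in *.
  split.
  - assert (a * (amax * (t + B)) <= a * x) by nra.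
    assert (t + B <= a * (amax * (t + B))) by nra.
    lra.
  - assert (a * x <= amax * x) by nra.
    assert (amax * x < amax * (amax * (t + B) + T)) by nra.
    lra.
Qed.

End Stages.

Theorem lemma6 (amax U0 T t0 : R) :
  1 <= amax -> 0 <= U0 -> 0 < T -> 0 <= t0 ->
  exists (t s : nat -> R),
    t 0%nat = t0 /\
    (forall k : nat, t k < t (S k)) /\
    (forall k : nat, t k <= s k /\ s k + T <= t (S k)) /\
    (forall (a b : R), 0 < a -> a <= amax -> / a <= amax -> Rabs b <= amax * U0 ->
       forall k : nat, image_in a b (s k) T (t k) (t (S k))).
Proof.
  intros HA HU HT Ht0.
  set (B := amax * U0).
  assert (HB : 0 <= B) by (unfold B; nra).
  set (t := stage_start amax B T t0).
  assert (Ht : forall k, 0 <= t k) by (intro k; exact (stage_start_ge0 _ _ _ HA HB HT _ k Ht0)).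
  exists t, (fun k => send_time amax B (t k)).
  assert (Hwindow : forall k, t k <= send_time amax B (t k) /\
                              send_time amax B (t k) + T <= t (S k)).
  { intro k; split.
    - pose proof (le_send_time _ _ HA HB _ (Ht k)); lra.
    - exact (send_time_end_le_next_stage _ _ _ HA HB HT _ (Ht k)). }
  split; [reflexivity|].
  split; [intro k; destruct (Hwindow k); lra|].
  split; [exact Hwindow|].
  intros a b Ha HaA HinvA Hb k.
  exact (image_in_stage _ _ T HA HB _ _ _ (Ht k) Ha HaA HinvA Hb).
Qed.
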